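(* Let $D$ be an integral domain that is not a field. Then $D$ is a RAV-domain if and only if $D$ is an AV-domain and its integral closure $\overline{D}$ is a rational valuation domain.
   Context: For a domain $D$ that is not a field, an element $a\in D$ is an almost uniformizing parameter if for each nonzero nonunit $y\in D$ there are natural numbers $m,n$ and a unit $u$ of $D$ with $y^m=ua^n$; a RAV-domain (rational almost valuation domain) is a domain having an almost uniformizing parameter. An AV-domain is a domain in which for all nonzero $a,b$ there is $n\ge1$ with $a^n\mid b^n$ or $b^n\mid a^n$. A rational valuation domain is a valuation domain whose value group is order-isomorphic to a subgroup of $(\mathbb{Q},+)$. $\overline{D}$ is the integral closure of $D$ in its quotient field. *)

From HB Require Import structures.
From mathcomp Require Import all_boot all_order all_algebra.
Set Implicit Arguments. Unset Strict Implicit. Unset Printing Implicit Defensive.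
Import Order.TTheory GRing.Theory Num.Theory.
Local Open Scope ring_scope.

Definition dvdr (D : comNzRingType) (a b : D) : Prop := exists c : D, b = a * c.

Definition is_field_dom (D : idomainType) : Prop :=
  forall x : D, x != 0 -> x \is a GRing.unit.

(* a is an almost uniformizing parameter of D ("natural numbers" = positive). *)
Definition almost_unif_param (D : idomainType) (a : D) : Prop :=
  forall y : D, y != 0 -> y \isn't a GRing.unit ->
    exists (m n : nat) (u : D), (0 < m)%N /\ (0 < n)%N /\
      u \is a GRing.unit /\ y ^+ m = u * a ^+ n.

Definition RAV_domain (D : idomainType) : Prop :=
  exists a : D, almost_unif_param a.

Definition AV_domain (D : idomainType) : Prop :=
  forall a b : D, a != 0 -> b != 0 ->
    exists n : nat, (0 < n)%N /\ (dvdr (a ^+ n) (b ^+ n) \/ dvdr (b ^+ n) (a ^+ n)).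

Definition toK (D : idomainType) (x : D) : {fraction D} := @FracField.tofrac D x.

Definition integral_closure (D : idomainType) (x : {fraction D}) : Prop :=
  exists p : {poly D}, p \is monic /\ root (map_poly (@toK D) p) x.

Definition valuation_domain_in (K : fieldType) (V : K -> Prop) : Prop :=
  forall x : K, x != 0 -> V x \/ V x^-1.

(* The value group of V is K^* / U(V), ordered by xU <= yU iff y/x in V.
   It is order-isomorphic to a subgroup of (Q,+) iff there is a map
   phi : K -> rat which is a group homomorphism on K^* and satisfies
   phi x <= phi y <-> y / x in V (this makes the induced map on K^*/U(V)
   a well-defined injective order embedding). *)
Definition rational_value_group_in (K : fieldType) (V : K -> Prop) : Prop :=
  exists phi : K -> rat,
    (forall x y : K, x != 0 -> y != 0 -> phi (x * y) = phi x + phi y) /\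
    (forall x y : K, x != 0 -> y != 0 -> (phi x <= phi y <-> V (y / x))).

Definition rational_valuation_domain_in (K : fieldType) (V : K -> Prop) : Prop :=
  valuation_domain_in V /\ rational_value_group_in V.

(* Let t be an almost uniformizing parameter. If d^m = u t^n with u a unit,
   the ratio n/m depends only on d, because no positive power of t is a unit;
   this gives a valuation v : D\{0} -> Q>=0, additive on products, which
   extends to the fraction field. A fraction is integral over D iff its value
   is nonnegative: if v(a) <= v(b) then a^M divides b^M, so b/a is a root of
   some X^M - c; an integral x = a/b has b^n x^j in D for every j, which by
   the Archimedean property of Q rules out v(x) < 0. Hence the integral
   closure is the valuation ring of v, and comparing values gives AV.
   Conversely, a Q-valued valuation phi of the integral closure is positive on
   the nonunits of D (a nonzero c with 1/c integral is a unit). Given a fixed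
   nonunit a and a nonunit y, m phi(y) = n phi(a) for some m, n > 0, and AV
   applied to y^m and a^n gives a divisibility between their k-th powers whose
   cofactor has value 0, hence is a unit. *)

From HB Require Import structures.
From mathcomp Require Import all_boot all_order all_algebra.
From mathcomp Require Import ring lra zify.
From Stdlib Require Import ClassicalEpsilon.
Import Order.TTheory GRing.Theory Num.Theory.
Set Implicit Arguments. Unset Strict Implicit. Unset Printing Implicit Defensive.
Local Open Scope ring_scope.

HB.instance Definition _ (D : idomainType) :=
  GRing.RMorphism.copy (@toK D) (@FracField.tofrac D).

Lemma not_field_nonunit (D : idomainType) :
  ~ is_field_dom D -> exists y : D, y != 0 /\ y \isn't a GRing.unit.
Proof.
move=> hD; apply: NNPP => no_nonunit; apply: hD => x xnz.
by apply/negPn/negP => xnu; apply: no_nonunit; exists x.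
Qed.

Section FractionField.
Variable D : idomainType.
Local Notation F := (@toK D).

Lemma toK_inj : injective F.
Proof. by move=> x y /eqP; rewrite tofrac_eq => /eqP. Qed.

Lemma toK_eq0 (x : D) : (F x == 0) = (x == 0).
Proof. exact: tofrac_eq0. Qed.

Local Open Scope quotient_scope.
Lemma toK_frac_repr (x : {fraction D}) : exists a b : D, b != 0 /\ x = F a / F b.
Proof.
elim/quotW: x => r; exists r.1, r.2; split; first exact: denom_ratioP.
rewrite /toK; unlock FracField.tofrac.
rewrite -[_^-1]/(FracField.inv _) -[_ * _]/(FracField.mul _ _) !piE.
apply/eqmodP; rewrite /= FracField.equivfE /FracField.mulf /FracField.invf /=.
rewrite !numden_Ratio ?oner_eq0 ?mul1r ?denom_ratioP //.
by rewrite mulr1 mulrC.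
Qed.
Local Close Scope quotient_scope.

Lemma horner_frac_clear_denom (r : {poly D}) (a b : D) (n : nat) :
  b != 0 -> (size r <= n)%N -> exists e : D, F b ^+ n * (map_poly F r).[F a / F b] = F e.
Proof.
move=> bnz r_small; have Fb : F b != 0 by rewrite toK_eq0.
exists (\sum_(i < size r) r`_i * a ^+ i * b ^+ (n - i)).
rewrite horner_coef (size_map_inj_poly toK_inj (rmorph0 _)) mulr_sumr rmorph_sum.
apply: eq_bigr => i _; rewrite coef_map !rmorphM !rmorphXn /=.
have i_le_n : (i <= n)%N by apply: leq_trans (ltnW (ltn_ord i)) r_small.
rewrite expr_div_n (expfB_cond _ (x := F b)); last by rewrite (negPf Fb) add0n.
by rewrite !mulrA; congr (_ * _); rewrite [RHS]mulrC !mulrA.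
Qed.

Lemma integral_closure_bounded_denom (a b : D) :
  b != 0 -> integral_closure (F a / F b) ->
  exists n, forall j, exists e, F b ^+ n * (F a / F b) ^+ j = F e.
Proof.
move=> bnz [p [p_monic p_root]]; exists (size p).-1 => j.
have := Pdiv.RingMonic.rdivp_eq p_monic 'X^j.
set q := Pdiv.Ring.rdivp _ _; set r := Pdiv.Ring.rmodp _ _ => Xj_eq.
have r_small : (size r <= (size p).-1)%N.
  have := Pdiv.Ring.ltn_rmodpN0 'X^j (monic_neq0 p_monic).
  by rewrite -/r; case: (size p).
suff -> : (F a / F b) ^+ j = (map_poly F r).[F a / F b].
  exact: horner_frac_clear_denom.
rewrite -[LHS]hornerXn -(map_polyXn F) Xj_eq rmorphD rmorphM /= hornerD hornerM.
by move/eqP: p_root => ->; rewrite mulr0 add0r.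
Qed.

Lemma unit_of_integral_inv (c : D) :
  c != 0 -> integral_closure (F c)^-1 -> c \is a GRing.unit.
Proof.
move=> cnz; rewrite -div1r -(rmorph1 F) => /(integral_closure_bounded_denom cnz).
case=> n /(_ n.+1) [e he]; have Fc : F c != 0 by rewrite toK_eq0.
have : F c * (F c ^+ n * (F 1 / F c) ^+ n.+1) = 1.
  by rewrite rmorph1 div1r exprVn mulrA -exprS mulfV ?expf_neq0.
rewrite he -rmorphM -(rmorph1 F) => /toK_inj ce1.
by apply/unitrPr; exists e.
Qed.

Lemma integral_div_of_dvdr_expr (a b : D) (M : nat) :
  a != 0 -> (0 < M)%N -> dvdr (a ^+ M) (b ^+ M) -> integral_closure (F b / F a).
Proof.
move=> anz M_gt0 [c bM]; exists ('X^M - c%:P); split; first exact: monicXnsubC.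
have FaM : F a ^+ M != 0 by rewrite expf_neq0 ?toK_eq0.
rewrite /root rmorphB /= map_polyXn map_polyC /= hornerD hornerN hornerXn hornerC.
by rewrite expr_div_n -!rmorphXn bM rmorphM /= mulrC mulKf ?subrr // rmorphXn.
Qed.

End FractionField.

Section LogMorphism.
Variables (K : fieldType) (phi : K -> rat).

Definition log_morph : Prop :=
  forall x y : K, x != 0 -> y != 0 -> phi (x * y) = phi x + phi y.

Hypothesis phiM : log_morph.

Lemma log_morph1 : phi 1 = 0.
Proof. by have := phiM (oner_neq0 K) (oner_neq0 K); rewrite mulr1; lra. Qed.

Lemma log_morphX (x : K) (k : nat) : x != 0 -> phi (x ^+ k) = k%:R * phi x.
Proof.
move=> xnz; elim: k => [|k IHk]; first by rewrite expr0 log_morph1 mul0r.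
by rewrite exprS phiM ?expf_neq0 // IHk -addn1 natrD; lra.
Qed.

Lemma log_morphV (x : K) : x != 0 -> phi x^-1 = - phi x.
Proof.
by move=> xnz; have := phiM xnz (invr_neq0 xnz); rewrite mulfV // log_morph1; lra.
Qed.

End LogMorphism.

Lemma almost_unif_param_nonunit (D : idomainType) (t a : D) : almost_unif_param t ->
  a != 0 -> a \isn't a GRing.unit -> t != 0 /\ t \isn't a GRing.unit.
Proof.
move=> t_param anz anu; have [m [n [u [m_gt0 [n_gt0 [uu e]]]]]] := t_param a anz anu.
split.
  apply: contraNneq anz => t0; move: e; rewrite t0 expr0n gtn_eqF // mulr0.
  by move/eqP; rewrite expf_eq0 m_gt0.
by apply: contra anu => tu; rewrite -(unitrX_pos _ m_gt0) e unitrM uu unitrX.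
Qed.

Section AlmostUniformizingParameter.
Variables (D : idomainType) (t : D).
Hypotheses (t_param : almost_unif_param t) (t_neq0 : t != 0)
  (t_nunit : t \isn't a GRing.unit).
Local Notation F := (@toK D).

Lemma exprt_cancel (u w : D) (n k : nat) : u \is a GRing.unit -> w \is a GRing.unit ->
  u * t ^+ n = w * t ^+ k -> n = k.
Proof.
wlog n_le_k : u w n k / (n <= k)%N.
  move=> wlog_le uu wu e; case: (leqP n k) => [|/ltnW] hnk; first exact: (wlog_le u w).
  by apply/esym; apply: (wlog_le w u k n).
move=> uu wu; rewrite -(subnK n_le_k) exprD mulrA => /(mulIf (expf_neq0 n t_neq0)).
case: (posnP (k - n)) => [/eqP|kn_gt0 ue]; first by rewrite subn_eq0 => hkn; lia.
by move: uu; rewrite ue unitrM unitrX_pos // (negPf t_nunit) andbF.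
Qed.

Lemma exprt_rep (d : D) : d != 0 ->
  exists m n u, [/\ (0 < m)%N, u \is a GRing.unit & d ^+ m = u * t ^+ n].
Proof.
move=> dnz; case: (boolP (d \is a GRing.unit)) => du.
  by exists 1%N, 0%N, d; rewrite expr1 expr0 mulr1.
by have [m [n [u [m_gt0 [_ [uu e]]]]]] := t_param dnz du; exists m, n, u.
Qed.

Lemma exprt_rep_uniq (d u u' : D) (m n m' n' : nat) :
  u \is a GRing.unit -> u' \is a GRing.unit ->
  d ^+ m = u * t ^+ n -> d ^+ m' = u' * t ^+ n' -> (n * m' = n' * m)%N.
Proof.
move=> uu uu' e e'; apply: (@exprt_cancel (u ^+ m') (u' ^+ m)); rewrite ?unitrX //.
by rewrite !exprM -!exprMn -e -e' -!exprM mulnC.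
Qed.

Definition is_exprt_rep (d : D) (mn : nat * nat) : Prop :=
  (0 < mn.1)%N /\ exists2 u, u \is a GRing.unit & d ^+ mn.1 = u * t ^+ mn.2.

(* Junk value: [tval 0 = 0]. *)
Definition tval (d : D) : rat :=
  let mn := epsilon (inhabits (1, 0)%N) (is_exprt_rep d) in mn.2%:R / mn.1%:R.

Lemma tvalE (d u : D) (m n : nat) : d != 0 -> (0 < m)%N -> u \is a GRing.unit ->
  d ^+ m = u * t ^+ n -> tval d = n%:R / m%:R.
Proof.
move=> dnz m_gt0 uu e; rewrite /tval.
have [] : is_exprt_rep d (epsilon (inhabits (1, 0)%N) (is_exprt_rep d)).
  by apply: epsilon_spec; exists (m, n); split => //; exists u.
case: (epsilon _ _) => m1 n1 /= m1_gt0 [u1 uu1 e1].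
apply/eqP; rewrite eqr_div ?pnatr_eq0 -?lt0n // -!natrM.
by rewrite (exprt_rep_uniq uu1 uu e1 e).
Qed.

Lemma tval_ge0 (d : D) : 0 <= tval d.
Proof. by rewrite divr_ge0 ?ler0n. Qed.

Lemma tval_unit (u : D) : u \is a GRing.unit -> tval u = 0.
Proof.
move=> uu; have unz : u != 0 by apply: contraTneq uu => ->; rewrite unitr0.
by rewrite (@tvalE u u 1 0) ?expr1 ?expr0 ?mulr1 ?mul0r.
Qed.

Lemma tvalM (a b : D) : a != 0 -> b != 0 -> tval (a * b) = tval a + tval b.
Proof.
move=> anz bnz.
have [m [n [u [m_gt0 uu e]]]] := exprt_rep anz.
have [m' [n' [w [m'_gt0 wu e']]]] := exprt_rep bnz.
have E : (a * b) ^+ (m * m') = (u ^+ m' * w ^+ m) * t ^+ (n * m' + n' * m).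
  by rewrite exprMn exprM e mulnC exprM e' !exprMn exprD -!exprM; ring.
rewrite (tvalE anz m_gt0 uu e) (tvalE bnz m'_gt0 wu e').
rewrite (tvalE (mulf_neq0 anz bnz) _ _ E) ?muln_gt0 ?m_gt0 ?unitrM ?unitrX //.
have m_neq0 : (m%:R : rat) != 0 by rewrite pnatr_eq0 -lt0n.
have m'_neq0 : (m'%:R : rat) != 0 by rewrite pnatr_eq0 -lt0n.
by rewrite natrD !natrM; field; rewrite m_neq0 m'_neq0.
Qed.

Lemma dvdr_expr_of_tval_le (a b : D) : a != 0 -> b != 0 -> tval a <= tval b ->
  exists2 M, (0 < M)%N & dvdr (a ^+ M) (b ^+ M).
Proof.
move=> anz bnz.
have [m [n [u [m_gt0 uu e]]]] := exprt_rep anz.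
have [m' [n' [w [m'_gt0 wu e']]]] := exprt_rep bnz.
rewrite (tvalE anz m_gt0 uu e) (tvalE bnz m'_gt0 wu e').
rewrite ler_pdivrMr ?ltr0n // mulrAC ler_pdivlMr ?ltr0n // -!natrM ler_nat => h.
exists (m * m')%N; first by rewrite muln_gt0 m_gt0.
exists (u^-1 ^+ m' * w ^+ m * t ^+ (n' * m - n * m')).
rewrite (exprM a) e (mulnC m m') (exprM b) e' !exprMn -!exprM.
rewrite -(subnK h) addnK exprD.
have uK : u ^+ m' * u^-1 ^+ m' = 1 by rewrite -exprMn mulrV // expr1n.
by rewrite -[LHS]mul1r -uK; ring.
Qed.

Definition is_frac_repr (x : {fraction D}) (ab : D * D) : Prop :=
  ab.2 != 0 /\ x = F ab.1 / F ab.2.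

Definition fval (x : {fraction D}) : rat :=
  let ab := epsilon (inhabits (0, 1)) (is_frac_repr x) in tval ab.1 - tval ab.2.

Lemma fvalE (a b : D) : a != 0 -> b != 0 -> fval (F a / F b) = tval a - tval b.
Proof.
move=> anz bnz; rewrite /fval.
have [] : is_frac_repr (F a / F b) (epsilon (inhabits (0, 1)) (is_frac_repr (F a / F b))).
  by apply: epsilon_spec; exists (a, b).
case: (epsilon _ _) => a' b' /= b'nz e.
have a'nz : a' != 0.
  apply/eqP => a'0; move/eqP: e; rewrite a'0 rmorph0 mul0r mulf_eq0 invr_eq0.
  by rewrite !toK_eq0 (negPf anz) (negPf bnz).
have : a * b' = a' * b.
  by apply: toK_inj; apply/eqP; rewrite !rmorphM -eqr_div ?toK_eq0 //; apply/eqP.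
by move/(congr1 tval); rewrite !tvalM //; lra.
Qed.

Lemma fval_toK (a : D) : a != 0 -> fval (F a) = tval a.
Proof.
move=> anz; have -> : F a = F a / F 1 by rewrite rmorph1 divr1.
rewrite fvalE ?oner_neq0 //.
by rewrite (tval_unit (unitr1 D)) subr0.
Qed.

Lemma fvalM : log_morph fval.
Proof.
move=> x y xnz ynz.
have [a [b [bnz ex]]] := toK_frac_repr x; have [c [d [dnz ey]]] := toK_frac_repr y.
have anz : a != 0 by apply: contraNneq xnz => a0; rewrite ex a0 rmorph0 mul0r.
have cnz : c != 0 by apply: contraNneq ynz => c0; rewrite ey c0 rmorph0 mul0r.
have -> : x * y = F (a * c) / F (b * d) by rewrite ex ey !rmorphM invfM mulrACA.
by rewrite ex ey !fvalE ?mulf_neq0 // !tvalM //; lra.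
Qed.

Lemma integral_closure_fval_ge0 (x : {fraction D}) :
  x != 0 -> integral_closure x <-> 0 <= fval x.
Proof.
move=> xnz; have [a [b [bnz x_def]]] := toK_frac_repr x; subst x.
have anz : a != 0 by apply: contraNneq xnz => ->; rewrite rmorph0 mul0r.
rewrite fvalE // subr_ge0; split => [x_int | /(dvdr_expr_of_tval_le bnz anz) [M M_gt0]].
  have [n bounded] := integral_closure_bounded_denom bnz x_int.
  rewrite leNgt; apply/negP => lt_ab; rewrite -subr_gt0 in lt_ab.
  set r := tval b - tval a in lt_ab.
  pose j := Num.bound (n%:R * tval b / r).
  have j_large : n%:R * tval b < j%:R * r.
    rewrite -ltr_pdivrMr //; apply: archi_boundP.
    by rewrite divr_ge0 ?(ltW lt_ab) // mulr_ge0 ?ler0n ?tval_ge0.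
  have [e e_def] := bounded j.
  have enz : e != 0 by rewrite -toK_eq0 -e_def mulf_neq0 ?expf_neq0 ?toK_eq0.
  have := tval_ge0 e; rewrite -fval_toK // -e_def fvalM ?expf_neq0 ?toK_eq0 //.
  rewrite !(log_morphX fvalM) ?toK_eq0 // fval_toK // fvalE //.
  rewrite /r in j_large; nra.
exact: integral_div_of_dvdr_expr.
Qed.

Lemma AV_of_almost_unif_param : AV_domain D.
Proof.
move=> a b anz bnz; case/orP: (le_total (tval a) (tval b)) => [ab | ba].
  by have [M M_gt0 h] := dvdr_expr_of_tval_le anz bnz ab; exists M; split => //; left.
by have [M M_gt0 h] := dvdr_expr_of_tval_le bnz anz ba; exists M; split => //; right.
Qed.

Lemma integral_closure_rational_valuation :
  rational_valuation_domain_in (@integral_closure D).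
Proof.
split=> [x xnz | ].
  rewrite !integral_closure_fval_ge0 ?invr_neq0 // (log_morphV fvalM xnz) oppr_ge0.
  by apply/orP; exact: le_total.
exists fval; split=> [|x y xnz ynz]; first exact: fvalM.
rewrite integral_closure_fval_ge0 ?mulf_neq0 ?invr_neq0 //.
by rewrite fvalM ?invr_neq0 // (log_morphV fvalM xnz) subr_ge0.
Qed.

End AlmostUniformizingParameter.

Lemma rat_commensurable (r p : rat) : 0 < r -> 0 < p ->
  exists m n : nat, [/\ (0 < m)%N, (0 < n)%N & m%:R * r = n%:R * p].
Proof.
move=> r_gt0 p_gt0.
exists (`|numq p| * `|denq r|)%N, (`|numq r| * `|denq p|)%N.
rewrite !muln_gt0 !absz_gt0 !denq_neq0 !numq_eq0 !gt_eqF //; split => //.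
rewrite !natrM !natr_absz !gtr0_norm ?denq_gt0 ?numq_gt0 //.
by rewrite -!mulrA ![_%:~R * _]mulrC -!numqE mulrC.
Qed.

Section RationalValueGroup.
Variables (D : idomainType) (phi : {fraction D} -> rat).
Hypothesis phiM : log_morph phi.
Hypothesis phi_le : forall x y, x != 0 -> y != 0 ->
  (phi x <= phi y <-> integral_closure (y / x)).
Local Notation F := (@toK D).

Lemma unit_of_phi_le0 (c : D) : c != 0 -> phi (F c) <= 0 -> c \is a GRing.unit.
Proof.
move=> cnz le0; apply: (unit_of_integral_inv cnz); rewrite -div1r.
by apply/phi_le; rewrite ?toK_eq0 ?oner_neq0 ?(log_morph1 phiM).
Qed.

Lemma phi_gt0 (y : D) : y != 0 -> y \isn't a GRing.unit -> 0 < phi (F y).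
Proof. by move=> ynz ynu; rewrite ltNge; apply: contraNN ynu; apply: unit_of_phi_le0. Qed.

Lemma associated_powers_of_phi_eq (a b : D) : AV_domain D ->
  a != 0 -> b != 0 -> phi (F a) = phi (F b) ->
  exists k u, [/\ (0 < k)%N, u \is a GRing.unit & a ^+ k = u * b ^+ k].
Proof.
move=> AV; wlog [k k_gt0 [c bk]] : a b / exists2 k, (0 < k)%N & dvdr (a ^+ k) (b ^+ k).
  move=> wlog_dvd anz bnz eab.
  have [k [k_gt0 [ab | ba]]] := AV a b anz bnz; first by apply: wlog_dvd => //; exists k.
  have [k' [u [k'_gt0 uu e]]] := wlog_dvd b a (ex_intro2 _ _ k k_gt0 ba) bnz anz (esym eab).
  by exists k', u^-1; split; rewrite ?unitrV // e mulKr.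
move=> anz bnz eab.
have cnz : c != 0.
  by apply: contraTneq (expf_neq0 k bnz) => c0; rewrite bk c0 mulr0 eqxx.
have phi_c : phi (F c) = 0.
  have := congr1 (phi \o F) bk; rewrite /= rmorphM phiM ?toK_eq0 ?expf_neq0 //.
  by rewrite !rmorphXn !(log_morphX phiM) ?toK_eq0 // eab; lra.
have cu : c \is a GRing.unit by rewrite unit_of_phi_le0 ?phi_c.
by exists k, c^-1; split; rewrite ?unitrV // bk mulrC mulrK.
Qed.

Lemma almost_unif_param_of_AV (a : D) : AV_domain D ->
  a != 0 -> a \isn't a GRing.unit -> almost_unif_param a.
Proof.
move=> AV anz anu y ynz ynu.
have [m [n [m_gt0 n_gt0 mn_phi]]] := rat_commensurable (phi_gt0 ynz ynu) (phi_gt0 anz anu).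
have [|k [u [k_gt0 uu e]]] := associated_powers_of_phi_eq AV (expf_neq0 m ynz) (expf_neq0 n anz).
  by rewrite !rmorphXn !(log_morphX phiM) ?toK_eq0.
exists (m * k)%N, (n * k)%N, u.
by rewrite !muln_gt0 m_gt0 n_gt0 k_gt0 !exprM.
Qed.

End RationalValueGroup.

Theorem theorem11 (D : idomainType) (hD : ~ is_field_dom D) :
  RAV_domain D <->
  (AV_domain D /\ rational_valuation_domain_in (@integral_closure D)).
Proof.
have [a [anz anu]] := not_field_nonunit hD.
split=> [[t t_param] | [AV [_ [phi [phiM phi_le]]]]].
  have [t_neq0 t_nunit] := almost_unif_param_nonunit t_param anz anu.
  split; first exact: AV_of_almost_unif_param t_param t_neq0 t_nunit.
  exact: integral_closure_rational_valuation t_param t_neq0 t_nunit.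
by exists a; exact: (almost_unif_param_of_AV phiM phi_le AV anz anu).
Qed.
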